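(* For the symmetric two-user Gaussian broadcast channel with feedback with parameters $(\sigma_s^2,\rho_s,\sigma_z^2,\rho_z)$ and every $0<D\le\sigma_s^2$, let $D_{\mathrm{th}}=\frac{\sigma_s^2(2-\rho_z-|\rho_s|)}{2-\rho_z}$. Then $E(D)\le E_{\mathrm{OL}}(D)$ (indeed the minimal energy per source-pair sample required by the uncoded joint source-channel Ozarow–Leung-type linear feedback scheme is at most $E_{\mathrm{OL}}(D)$), where $$E_{\mathrm{OL}}(D)=\frac{2\sigma_z^2}{3-\rho_z}\log\!\Big(\frac{\sigma_s^2(1+|\rho_s|)}{D+(2-\rho_z)(D-\sigma_s^2)+\sigma_s^2|\rho_s|}\Big)\quad\text{if } D\ge D_{\mathrm{th}},$$ $$E_{\mathrm{OL}}(D)=2\sigma_z^2\Big(\log\!\Big(\frac{(2-\rho_z-|\rho_s|)\sigma_s^2}{(2-\rho_z)D}\Big)+\frac{1}{3-\rho_z}\log\!\Big(\frac{(2-\rho_z)(1+|\rho_s|)}{2-\rho_z-|\rho_s|}\Big)\Big)\quad\text{if } D<D_{\mathrm{th}},$$ with $\log$ the natural logarithm.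
   Context: Setup: An encoder observes $m$ i.i.d. pairs $(S_{1,j},S_{2,j})\sim\mathcal N(0,\mathsf Q_s)$, $j=1,\dots,m$, with $\mathsf Q_s=\sigma_s^2\begin{pmatrix}1&\rho_s\\\rho_s&1\end{pmatrix}$, $|\rho_s|<1$. The channel is used $n$ times; at time $k$, receiver $i\in\{1,2\}$ observes $Y_{i,k}=X_k+Z_{i,k}$, where the pairs $(Z_{1,k},Z_{2,k})\sim\mathcal N(0,\mathsf Q_z)$ are i.i.d. over $k$ and independent of the sources, $\mathsf Q_z=\sigma_z^2\begin{pmatrix}1&\rho_z\\\rho_z&1\end{pmatrix}$, $|\rho_z|<1$; all signals are real. The encoder has noiseless causal feedback of both outputs: $X_k=f_k(S_{1,1}^m,S_{2,1}^m,\mathbf Y_1,\dots,\mathbf Y_{k-1})$ with $\mathbf Y_k=(Y_{1,k},Y_{2,k})$. Receiver $i$ outputs $\hat S_{i,1}^m=g_i(Y_{i,1}^n)$. A $(D,E,m,n)$ code is a collection $\{f_k\}_{k=1}^n,g_1,g_2$ with $\sum_{j=1}^m\mathbb E[(S_{i,j}-\hat S_{i,j})^2]\le mD$ for $i=1,2$ and $\sum_{k=1}^n\mathbb E[X_k^2]\le mE$. The energy-distortion tradeoff $E(D)$ is the minimal $E$ such that for every $\epsilon>0$ there exist $m,n$ and a $(D+\epsilon,E+\epsilon,m,n)$ code. *)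

From Stdlib Require Import Reals Lra Lia.
Open Scope R_scope.

Fixpoint rsum (n : nat) (f : nat -> R) : R :=
  match n with O => 0 | S n' => rsum n' f + f n' end.

(* A real linear form in the underlying Gaussian variables
   S_{i,j} (i in {0,1} = user index, j = source sample index) and
   Z_{i,l} (i = receiver index, l = channel use index).
   lf_s u i j = coefficient of S_{i,j};  lf_z u i l = coefficient of Z_{i,l}.
   (Indices are 0-based; user/receiver 1,2 of the paper are 0,1 here.) *)
Record LF := mkLF { lf_s : nat -> nat -> R ; lf_z : nat -> nat -> R }.

Definition lf_zero : LF := mkLF (fun _ _ => 0) (fun _ _ => 0).
Definition lf_add (u v : LF) : LF :=
  mkLF (fun i j => lf_s u i j + lf_s v i j) (fun i l => lf_z u i l + lf_z v i l).
Definition lf_scale (c : R) (u : LF) : LF :=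
  mkLF (fun i j => c * lf_s u i j) (fun i l => c * lf_z u i l).
Definition lf_sub (u v : LF) : LF := lf_add u (lf_scale (-1) v).
Definition lf_S (i j : nat) : LF :=
  mkLF (fun i' j' => if andb (Nat.eqb i i') (Nat.eqb j j') then 1 else 0) (fun _ _ => 0).
Definition lf_Z (i l : nat) : LF :=
  mkLF (fun _ _ => 0) (fun i' l' => if andb (Nat.eqb i i') (Nat.eqb l l') then 1 else 0).

(* Second moment E[(u . W)^2] of a linear form, when the pairs
   (S_{0,j},S_{1,j}), j<m, are i.i.d. N(0, Q_s) with
   Q_s = ss*[[1,rs],[rs,1]], the pairs (Z_{0,l},Z_{1,l}), l<n, are i.i.d.
   N(0, Q_z) with Q_z = sz*[[1,rz],[rz,1]], and sources and noises are
   independent.  (Only coefficients with j<m, l<n matter.) *)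
Definition second_moment (ss rs sz rz : R) (m n : nat) (u : LF) : R :=
  rsum m (fun j => ss * (lf_s u 0 j ^ 2 + lf_s u 1 j ^ 2
                          + 2 * rs * lf_s u 0 j * lf_s u 1 j))
  + rsum n (fun l => sz * (lf_z u 0 l ^ 2 + lf_z u 1 l ^ 2
                          + 2 * rz * lf_z u 0 l * lf_z u 1 l)).

(* Linear feedback encoder:
     X_k = sum_{i,j<m} a k i j * S_{i,j}
           + sum_{l<k} sum_{i} b k l i * Y_{i,l},   Y_{i,l} = X_l + Z_{i,l}.
   xf fuel k computes the linear form of X_k by recursion on l<k; it is
   correct as soon as fuel > k, and we use fuel = S k. *)
Fixpoint xf (a b : nat -> nat -> nat -> R) (fuel k : nat) : LF :=
  match fuel with
  | O => lf_zero
  | S f =>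
      mkLF
        (fun i j => a k i j
            + rsum k (fun l => (b k l 0%nat + b k l 1%nat) * lf_s (xf a b f l) i j))
        (fun i l' => rsum k (fun l => (b k l 0%nat + b k l 1%nat) * lf_z (xf a b f l) i l')
            + (if Nat.ltb l' k then b k l' i else 0))
  end.

Definition Xform (a b : nat -> nat -> nat -> R) (k : nat) : LF := xf a b (S k) k.

Definition Yform (a b : nat -> nat -> nat -> R) (i k : nat) : LF :=
  lf_add (Xform a b k) (lf_Z i k).

Fixpoint lf_sum (n : nat) (f : nat -> LF) : LF :=
  match n with O => lf_zero | S n' => lf_add (lf_sum n' f) (f n') end.

Definition Shat (a b c : nat -> nat -> nat -> R) (n i j : nat) : LF :=
  lf_sum n (fun k => lf_scale (c i j k) (Yform a b i k)).

Definition linear_code (ss rs sz rz : R) (D E : R) (m n : nat)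
    (a b c : nat -> nat -> nat -> R) : Prop :=
  (forall i : nat, (i < 2)%nat ->
     rsum m (fun j => second_moment ss rs sz rz m n
                        (lf_sub (lf_S i j) (Shat a b c n i j)))
     <= INR m * D)
  /\ rsum n (fun k => second_moment ss rs sz rz m n (Xform a b k)) <= INR m * E.

Definition lin_achievable (ss rs sz rz D E : R) : Prop :=
  forall eps : R, 0 < eps ->
    exists (m n : nat) (a b c : nat -> nat -> nat -> R),
      (0 < m)%nat /\ linear_code ss rs sz rz (D + eps) (E + eps) m n a b c.

Definition D_th (ss rs rz : R) : R := ss * (2 - rz - Rabs rs) / (2 - rz).

Definition E_OL (ss rs sz rz D : R) : R :=
  if Rle_dec (D_th ss rs rz) D then
    2 * sz / (3 - rz) *
      ln (ss * (1 + Rabs rs) / (D + (2 - rz) * (D - ss) + ss * Rabs rs))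
  else
    2 * sz * ( ln ((2 - rz - Rabs rs) * ss / ((2 - rz) * D))
             + / (3 - rz) * ln ((2 - rz) * (1 + Rabs rs) / (2 - rz - Rabs rs))).

From Stdlib Require Import Reals Lra Lia ZArith FunctionalExtensionality.
Open Scope R_scope.

(* A single source pair suffices.  Through the feedback the encoder knows both
   receivers' estimation errors [E0], [E1]; at every channel use it sends a combination
   of them of power [t sz], and each receiver makes an LMMSE correction, so the error
   covariance follows an explicit recursion.  In an Ozarow-Leung phase the encoder
   sends [E0 + s E1] with [s = sign rs]: the two error variances stay equal,
   [var + s C] shrinks by the factor [(1 + t (1 + rz) / 2) / (1 + t)^2] per use, and
   [(2 - rz) var - s C] never grows, so [var] reaches any [Dm >= D_th].  Then each
   error is sent alone and shrinks by [1 / (1 + t)] per use, from [Dm] to [D].  As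
   [t -> 0] the energy spent tends to [E_OL D], with [Dm = max D D_th]. *)

Lemma div_nonneg x y : 0 <= x -> 0 < y -> 0 <= x / y.
Proof. intros Hx Hy; apply Rmult_le_pos; [exact Hx | apply Rlt_le, Rinv_0_lt_compat, Hy]. Qed.

Lemma rsum_ext n f g : (forall l, (l < n)%nat -> f l = g l) -> rsum n f = rsum n g.
Proof.
  induction n as [|n IH]; intros Hfg; cbn [rsum]; [reflexivity|].
  rewrite IH, Hfg; [reflexivity | lia | intros; apply Hfg; lia].
Qed.

Lemma rsum_add n f g : rsum n (fun l => f l + g l) = rsum n f + rsum n g.
Proof. induction n as [|n IH]; cbn [rsum]; [ring|]. rewrite IH; ring. Qed.

Lemma rsum_scal n c f : rsum n (fun l => c * f l) = c * rsum n f.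
Proof. induction n as [|n IH]; cbn [rsum]; [ring|]. rewrite IH; ring. Qed.

Lemma rsum_eq0 n f : (forall l, (l < n)%nat -> f l = 0) -> rsum n f = 0.
Proof.
  induction n as [|n IH]; intros Hf; cbn [rsum]; [reflexivity|].
  rewrite IH, Hf; [ring | lia | intros; apply Hf; lia].
Qed.

Lemma rsum_delta n k (f : nat -> R) :
  rsum n (fun l => if Nat.eqb l k then f l else 0) = if Nat.ltb k n then f k else 0.
Proof.
  induction n as [|n IH]; cbn [rsum]; [destruct (Nat.ltb_spec k 0); [lia|reflexivity]|].
  rewrite IH.
  destruct (Nat.eqb_spec n k), (Nat.ltb_spec k n), (Nat.ltb_spec k (S n)); subst; try lia; ring.
Qed.

Lemma rsum_le_const n f M : (forall l, (l < n)%nat -> f l <= M) -> rsum n f <= INR n * M.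
Proof.
  induction n as [|n IH]; intros Hf; cbn [rsum]; [simpl; lra|].
  rewrite S_INR.
  assert (rsum n f <= INR n * M) by (apply IH; intros; apply Hf; lia).
  assert (f n <= M) by (apply Hf; lia).
  lra.
Qed.

Lemma lf_ext (u v : LF) :
  (forall i j, lf_s u i j = lf_s v i j) -> (forall i l, lf_z u i l = lf_z v i l) -> u = v.
Proof.
  destruct u as [us uz], v as [vs vz]; cbn; intros Hs Hz.
  replace vs with us by (do 2 (apply functional_extensionality; intro); apply Hs).
  replace vz with uz by (do 2 (apply functional_extensionality; intro); apply Hz).
  reflexivity.
Qed.

Lemma xf_fuel a b f g k : (k < f)%nat -> (k < g)%nat -> xf a b f k = xf a b g k.
Proof.
  revert g k; induction f as [|f IH]; intros g k Hf Hg; [lia|].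
  destruct g as [|g]; [lia|]; cbn [xf].
  f_equal; do 2 (apply functional_extensionality; intro); f_equal;
    apply rsum_ext; intros l Hl; rewrite (IH g) by lia; reflexivity.
Qed.

Lemma Xform_s a b k i j :
  lf_s (Xform a b k) i j
  = a k i j + rsum k (fun l => (b k l 0%nat + b k l 1%nat) * lf_s (Xform a b l) i j).
Proof.
  unfold Xform at 1; cbn [xf lf_s]; f_equal.
  apply rsum_ext; intros l Hl; unfold Xform; rewrite (xf_fuel _ _ k (S l)) by lia; reflexivity.
Qed.

Lemma Xform_z a b k i l' :
  lf_z (Xform a b k) i l'
  = rsum k (fun l => (b k l 0%nat + b k l 1%nat) * lf_z (Xform a b l) i l')
    + (if Nat.ltb l' k then b k l' i else 0).
Proof.
  unfold Xform at 1; cbn [xf lf_z]; f_equal.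
  apply rsum_ext; intros l Hl; unfold Xform; rewrite (xf_fuel _ _ k (S l)) by lia; reflexivity.
Qed.

(* [E[(f . W) (g . W)]] for [N] i.i.d. pairs [W_l ~ N(0, sg [[1, rho], [rho, 1]])]. *)
Definition pair_form (sg rho : R) (N : nat) (f g : nat -> nat -> R) : R :=
  rsum N (fun l => sg * (f 0%nat l * g 0%nat l + f 1%nat l * g 1%nat l
                         + rho * (f 0%nat l * g 1%nat l + f 1%nat l * g 0%nat l))).

Lemma pair_form_sym sg rho N f g : pair_form sg rho N f g = pair_form sg rho N g f.
Proof. apply rsum_ext; intros; ring. Qed.

Lemma pair_form_add sg rho N f f' g :
  pair_form sg rho N (fun i l => f i l + f' i l) g
  = pair_form sg rho N f g + pair_form sg rho N f' g.
Proof. unfold pair_form; rewrite <- rsum_add; apply rsum_ext; intros; ring. Qed.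

Lemma pair_form_scale sg rho N c f g :
  pair_form sg rho N (fun i l => c * f i l) g = c * pair_form sg rho N f g.
Proof. unfold pair_form; rewrite <- rsum_scal; apply rsum_ext; intros; ring. Qed.

Lemma pair_form_zero sg rho N g : pair_form sg rho N (fun _ _ => 0) g = 0.
Proof. apply rsum_eq0; intros; ring. Qed.

Lemma pair_form_unit sg rho N f i k : (i < 2)%nat -> (k < N)%nat ->
  pair_form sg rho N f (fun i' l => if andb (Nat.eqb i i') (Nat.eqb k l) then 1 else 0)
  = sg * (f i k + rho * f (1 - i)%nat k).
Proof.
  intros Hi Hk; unfold pair_form.
  rewrite (rsum_ext N _ (fun l => if Nat.eqb l k then sg * (f i k + rho * f (1 - i)%nat k) else 0)).
  - rewrite rsum_delta; destruct (Nat.ltb_spec k N); [reflexivity|lia].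
  - intros l _; destruct (Nat.eqb_spec k l), (Nat.eqb_spec l k); subst; try lia;
      destruct i as [|[|]]; cbn; try lia; ring.
Qed.

Definition cov (ss rs sz rz : R) (m n : nat) (u v : LF) : R :=
  pair_form ss rs m (lf_s u) (lf_s v) + pair_form sz rz n (lf_z u) (lf_z v).

Definition past (k : nat) (u : LF) : Prop := forall i l, (k <= l)%nat -> lf_z u i l = 0.

Section Covariance.
Variables (ss rs sz rz : R) (m n : nat).
Local Notation cov := (cov ss rs sz rz m n).

Lemma second_moment_cov u : second_moment ss rs sz rz m n u = cov u u.
Proof. unfold second_moment, cov, pair_form; f_equal; apply rsum_ext; intros; ring. Qed.

Lemma cov_sym u v : cov u v = cov v u.
Proof. unfold cov; rewrite pair_form_sym, (pair_form_sym sz); reflexivity. Qed.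

Lemma cov_add_l u v w : cov (lf_add u v) w = cov u w + cov v w.
Proof. unfold cov; cbn [lf_s lf_z lf_add]; rewrite !pair_form_add; ring. Qed.

Lemma cov_scale_l c u w : cov (lf_scale c u) w = c * cov u w.
Proof. unfold cov; cbn [lf_s lf_z lf_scale]; rewrite !pair_form_scale; ring. Qed.

Lemma cov_sub_l u v w : cov (lf_sub u v) w = cov u w - cov v w.
Proof. unfold lf_sub; rewrite cov_add_l, cov_scale_l; ring. Qed.

Lemma cov_add_r u v w : cov w (lf_add u v) = cov w u + cov w v.
Proof. rewrite !(cov_sym w); apply cov_add_l. Qed.

Lemma cov_scale_r c u w : cov w (lf_scale c u) = c * cov w u.
Proof. rewrite !(cov_sym w); apply cov_scale_l. Qed.

Lemma cov_sub_r u v w : cov w (lf_sub u v) = cov w u - cov w v.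
Proof. rewrite !(cov_sym w); apply cov_sub_l. Qed.

Lemma cov_Z_r u i k : (i < 2)%nat -> (k < n)%nat ->
  cov u (lf_Z i k) = sz * (lf_z u i k + rz * lf_z u (1 - i)%nat k).
Proof.
  intros Hi Hk; unfold cov; cbn [lf_s lf_z lf_Z].
  rewrite pair_form_sym, pair_form_zero, pair_form_unit by assumption; ring.
Qed.

Lemma cov_past_Z u i k : (i < 2)%nat -> (k < n)%nat -> past k u -> cov u (lf_Z i k) = 0.
Proof. intros Hi Hk Hu; rewrite cov_Z_r, !Hu by (assumption || lia); ring. Qed.

Lemma cov_Z_past u i k : (i < 2)%nat -> (k < n)%nat -> past k u -> cov (lf_Z i k) u = 0.
Proof. rewrite cov_sym; apply cov_past_Z. Qed.

Lemma cov_Z_Z i i' k : (i < 2)%nat -> (i' < 2)%nat -> (k < n)%nat ->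
  cov (lf_Z i k) (lf_Z i' k) = sz * (if Nat.eqb i i' then 1 else rz).
Proof.
  intros Hi Hi' Hk; rewrite cov_Z_r by assumption; cbn [lf_z lf_Z].
  rewrite Nat.eqb_refl; destruct i as [|[|]], i' as [|[|]]; cbn; try lia; ring.
Qed.

Lemma cov_S_S i i' j : (i < 2)%nat -> (i' < 2)%nat -> (j < m)%nat ->
  cov (lf_S i j) (lf_S i' j) = ss * (if Nat.eqb i i' then 1 else rs).
Proof.
  intros Hi Hi' Hj; unfold cov; cbn [lf_s lf_z lf_S].
  rewrite pair_form_sym, pair_form_unit, pair_form_zero by assumption.
  rewrite Nat.eqb_refl; destruct i as [|[|]], i' as [|[|]]; cbn; try lia; ring.
Qed.

End Covariance.

Record ErrCov := mkErrCov { var0 : R; var1 : R; cov01 : R }.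

(* At each channel use the encoder sends [X = wt0 E0 + wt1 E1], a combination of the
   receivers' current estimation errors (which it knows through the feedback), and
   receiver [i] replaces its error [E_i] by [E_i - gain_i Y_i]. *)
Record Coef := mkCoef { wt0 : R; wt1 : R; gain0 : R; gain1 : R }.

(* Zero beyond the two users, so that the code coefficients built from them vanish
   on the unused indices [i >= 2] of [LF]. *)
Definition wt (p : Coef) (i : nat) : R :=
  match i with 0 => wt0 p | 1 => wt1 p | _ => 0 end.
Definition gain (p : Coef) (i : nat) : R :=
  match i with 0 => gain0 p | 1 => gain1 p | _ => 0 end.

Definition power (st : ErrCov) (w0 w1 : R) : R :=
  w0 * w0 * var0 st + w1 * w1 * var1 st + 2 * w0 * w1 * cov01 st.
Definition xcorr0 (st : ErrCov) (w0 w1 : R) : R := w0 * var0 st + w1 * cov01 st.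
Definition xcorr1 (st : ErrCov) (w0 w1 : R) : R := w0 * cov01 st + w1 * var1 st.

Definition next_errcov (sz rz : R) (st : ErrCov) (p : Coef) : ErrCov :=
  let P := power st (wt0 p) (wt1 p) in
  let g0 := xcorr0 st (wt0 p) (wt1 p) in
  let g1 := xcorr1 st (wt0 p) (wt1 p) in
  mkErrCov (var0 st - 2 * gain0 p * g0 + gain0 p * gain0 p * (P + sz))
           (var1 st - 2 * gain1 p * g1 + gain1 p * gain1 p * (P + sz))
           (cov01 st - gain0 p * g1 - gain1 p * g0 + gain0 p * gain1 p * (P + rz * sz)).

Section LinearFeedbackScheme.
Variables (ss rs sz rz : R) (policy : nat -> ErrCov -> Coef).

Fixpoint errcov (k : nat) : ErrCov :=
  match k with
  | O => mkErrCov ss ss (ss * rs)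
  | S k' => next_errcov sz rz (errcov k') (policy k' (errcov k'))
  end.

Definition coef (k : nat) : Coef := policy k (errcov k).

Definition enc_src (k i j : nat) : R := if Nat.eqb j 0 then wt (coef k) i else 0.
Definition enc_fb (k l i : nat) : R := - (wt (coef k) i * gain (coef l) i).
Definition dec (i j k : nat) : R := gain (coef k) i.

Local Notation X := (Xform enc_src enc_fb).

Definition err (k i : nat) : LF := lf_sub (lf_S i 0) (Shat enc_src enc_fb dec k i 0).

Lemma err_0 i : err 0 i = lf_S i 0.
Proof. apply lf_ext; intros; cbn; ring. Qed.

Lemma err_S k i :
  err (S k) i = lf_sub (err k i) (lf_scale (gain (coef k) i) (lf_add (X k) (lf_Z i k))).
Proof.
  apply lf_ext; intros; unfold err, Shat, dec;
    cbn [lf_sum lf_s lf_z lf_sub lf_add lf_scale Yform]; ring.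
Qed.

Lemma err_comb_s p k i j :
  wt p 0 * lf_s (err k 0) i j + wt p 1 * lf_s (err k 1) i j
  = (if Nat.eqb j 0 then wt p i else 0)
    + rsum k (fun l => (- (wt p 0 * gain (coef l) 0) + - (wt p 1 * gain (coef l) 1))
                       * lf_s (X l) i j).
Proof.
  induction k as [|k IH].
  - destruct i as [|[|]], j; cbn; ring.
  - rewrite !err_S; cbn [lf_s lf_sub lf_add lf_scale lf_Z rsum]; lra.
Qed.

Lemma err_comb_z p k i l' :
  wt p 0 * lf_z (err k 0) i l' + wt p 1 * lf_z (err k 1) i l'
  = rsum k (fun l => (- (wt p 0 * gain (coef l) 0) + - (wt p 1 * gain (coef l) 1))
                     * lf_z (X l) i l')
    + (if Nat.ltb l' k then - (wt p i * gain (coef l') i) else 0).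
Proof.
  induction k as [|k IH].
  - cbn; ring.
  - rewrite !err_S; cbn [lf_z lf_sub lf_add lf_scale lf_Z rsum].
    destruct (Nat.eqb_spec k l'), (Nat.ltb_spec l' k), (Nat.ltb_spec l' (S k));
      try lia; subst; destruct i as [|[|]]; cbn [Nat.eqb andb wt gain] in *; lra.
Qed.

Lemma Xform_err k :
  X k = lf_add (lf_scale (wt (coef k) 0) (err k 0)) (lf_scale (wt (coef k) 1) (err k 1)).
Proof.
  apply lf_ext; intros; cbn [lf_s lf_z lf_add lf_scale].
  - rewrite Xform_s, err_comb_s; reflexivity.
  - rewrite Xform_z, err_comb_z; reflexivity.
Qed.

Lemma err_past k i : past k (err k i).
Proof.
  revert i; induction k as [|k IH]; intros i i' l Hl.
  - cbn; ring.
  - rewrite err_S, Xform_err; cbn [lf_z lf_sub lf_add lf_scale lf_Z].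
    rewrite !IH by lia; destruct (Nat.eqb_spec k l); [lia|].
    rewrite Bool.andb_false_r; ring.
Qed.

Variable n : nat.
Local Notation cov := (cov ss rs sz rz 1 n).

Lemma cov_err k : (k <= n)%nat ->
  cov (err k 0) (err k 0) = var0 (errcov k) /\ cov (err k 1) (err k 1) = var1 (errcov k)
  /\ cov (err k 0) (err k 1) = cov01 (errcov k).
Proof.
  induction k as [|k IH]; intros Hk.
  - rewrite !err_0, !cov_S_S by lia; cbn; repeat split; ring.
  - destruct IH as (H00 & H11 & H01); [lia|].
    rewrite !err_S, !Xform_err; cbn [errcov].
    repeat rewrite ?cov_sub_l, ?cov_sub_r, ?cov_add_l, ?cov_add_r, ?cov_scale_l, ?cov_scale_r.
    rewrite ?cov_Z_Z, ?cov_past_Z, ?cov_Z_past by (lia || apply err_past).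
    rewrite (cov_sym _ _ _ _ _ _ (err k 1) (err k 0)), H00, H11, H01.
    unfold next_errcov, power, xcorr0, xcorr1, coef; cbn; repeat split; ring.
Qed.

Lemma cov_Xform k : (k <= n)%nat ->
  cov (X k) (X k) = power (errcov k) (wt0 (coef k)) (wt1 (coef k)).
Proof.
  intros Hk; destruct (cov_err k Hk) as (H00 & H11 & H01).
  rewrite Xform_err; repeat rewrite ?cov_add_l, ?cov_add_r, ?cov_scale_l, ?cov_scale_r.
  rewrite (cov_sym _ _ _ _ _ _ (err k 1) (err k 0)), H00, H11, H01.
  unfold power; cbn; ring.
Qed.

Lemma scheme_linear_code D P :
  var0 (errcov n) <= D -> var1 (errcov n) <= D ->
  (forall k, (k < n)%nat -> power (errcov k) (wt0 (coef k)) (wt1 (coef k)) <= P) ->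
  linear_code ss rs sz rz D (INR n * P) 1 n enc_src enc_fb dec.
Proof.
  intros HD0 HD1 HP; destruct (cov_err n (le_n n)) as (H00 & H11 & _); split.
  - intros i Hi; cbn [rsum]; rewrite Rplus_0_l, Rmult_1_l, second_moment_cov; fold (err n i).
    destruct i as [|[|]]; [rewrite H00 | rewrite H11 | lia]; assumption.
  - rewrite Rmult_1_l; apply rsum_le_const; intros k Hk.
    rewrite second_moment_cov, cov_Xform by lia; auto.
Qed.

End LinearFeedbackScheme.

Section Amplitude.
Variables sz t : R.
Hypotheses (Ht : 0 < t) (Hsz : 0 < sz).

(* For [q <= 0] Rocq's [/] and [sqrt] make [amp q = 0], so nothing is sent. *)
Definition amp (q : R) : R := sqrt (t * sz / q).

Lemma amp_sq q : 0 < q -> amp q * amp q * q = t * sz.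
Proof.
  intros Hq; unfold amp; rewrite sqrt_sqrt; [field; lra|].
  apply Rlt_le, Rdiv_lt_0_compat; nra.
Qed.

Lemma amp_nonpos q : q <= 0 -> amp q = 0.
Proof.
  intros Hq; apply sqrt_neg_0.
  destruct (Req_dec q 0) as [->|Hq0].
  - unfold Rdiv; rewrite Rinv_0; lra.
  - assert (0 < t * sz) by nra.
    assert (0 < / - q) by (apply Rinv_0_lt_compat; lra).
    replace (t * sz / q) with (- (t * sz * / - q)) by (field; lra); nra.
Qed.

Lemma amp_power q : 0 <= amp q * amp q * q <= t * sz.
Proof.
  destruct (Rlt_le_dec 0 q) as [Hq|Hq].
  - rewrite amp_sq by assumption; nra.
  - rewrite amp_nonpos by assumption; nra.
Qed.

Lemma amp_contraction V : V - (amp V * V) * (amp V * V) / (amp V * amp V * V + sz) <= V / (1 + t).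
Proof.
  destruct (Rlt_le_dec 0 V) as [HV|HV].
  - replace ((amp V * V) * (amp V * V)) with ((amp V * amp V * V) * V) by ring.
    rewrite amp_sq by assumption; right; field; nra.
  - rewrite amp_nonpos by assumption.
    replace (V - 0 * V * (0 * V) / (0 * 0 * V + sz)) with V by (field; lra).
    apply (Rmult_le_reg_r (1 + t)); [lra|].
    unfold Rdiv; rewrite Rmult_assoc, Rinv_l; nra.
Qed.

End Amplitude.

Section LmmseSteps.
Variables sz rz t : R.
Hypotheses (Ht : 0 < t) (Hsz : 0 < sz) (Hrz : -1 < rz < 1).

Definition lmmse_gains (st : ErrCov) (w0 w1 : R) : Coef :=
  let K := power st w0 w1 + sz in mkCoef w0 w1 (xcorr0 st w0 w1 / K) (xcorr1 st w0 w1 / K).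

Definition lmmse_along (d0 d1 : R) (st : ErrCov) : Coef :=
  let a := amp sz t (power st d0 d1) in lmmse_gains st (a * d0) (a * d1).

Lemma power_scale st a d0 d1 : power st (a * d0) (a * d1) = a * a * power st d0 d1.
Proof. unfold power; ring. Qed.

Lemma lmmse_along_power d0 d1 st :
  0 <= power st (wt0 (lmmse_along d0 d1 st)) (wt1 (lmmse_along d0 d1 st)) <= t * sz.
Proof. cbn; rewrite power_scale; apply amp_power; assumption. Qed.

Lemma next_lmmse_gains st w0 w1 : 0 <= power st w0 w1 ->
  let P := power st w0 w1 in let g0 := xcorr0 st w0 w1 in let g1 := xcorr1 st w0 w1 in
  next_errcov sz rz st (lmmse_gains st w0 w1)
  = mkErrCov (var0 st - g0 * g0 / (P + sz)) (var1 st - g1 * g1 / (P + sz))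
             (cov01 st - 2 * g0 * g1 / (P + sz) + g0 * g1 * (P + rz * sz) / ((P + sz) * (P + sz))).
Proof. intros HP P g0 g1; subst P g0 g1; unfold next_errcov; cbn; f_equal; field; lra. Qed.

Definition ol_factor : R := (1 + t * (1 + rz) / 2) / ((1 + t) * (1 + t)).

Lemma ol_gains s st : s * s = 1 -> var0 st = var1 st -> 0 < var0 st + s * cov01 st ->
  let p := lmmse_along 1 s st in let g0 := xcorr0 st (wt0 p) (wt1 p) in
  power st (wt0 p) (wt1 p) = t * sz /\ xcorr1 st (wt0 p) (wt1 p) = s * g0
  /\ g0 * g0 = t * sz * (var0 st + s * cov01 st) / 2.
Proof.
  intros Hs Hsym HU p g0; subst p g0; cbn [lmmse_along lmmse_gains wt0 wt1].
  set (V := var0 st) in *; set (C := cov01 st) in *; set (U := V + s * C) in *.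
  assert (Hq : power st 1 s = 2 * U).
  { unfold power; rewrite <- Hsym; fold V C.
    transitivity (V + s * s * V + 2 * s * C); [ring | rewrite Hs; unfold U; ring]. }
  set (a := amp sz t (power st 1 s)).
  assert (Ha : a * a * (2 * U) = t * sz) by (unfold a; rewrite Hq; apply amp_sq; lra).
  assert (Hg0 : xcorr0 st (a * 1) (a * s) = a * U) by (unfold xcorr0, U; fold V C; ring).
  rewrite Hg0; split; [rewrite power_scale, Hq; exact Ha | split].
  - unfold xcorr1, U; rewrite <- Hsym; fold V C.
    transitivity (a * (s * s) * C + a * s * V); [rewrite Hs | ]; ring.
  - replace (a * U * (a * U)) with (a * a * (2 * U) * U / 2) by field; rewrite Ha; ring.
Qed.

Lemma ol_step s st : s * s = 1 -> var0 st = var1 st -> 0 < var0 st + s * cov01 st ->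
  let st' := next_errcov sz rz st (lmmse_along 1 s st) in
  var0 st' = var1 st'
  /\ var0 st' + s * cov01 st' = (var0 st + s * cov01 st) * ol_factor
  /\ (2 - rz) * var0 st' - s * cov01 st' <= (2 - rz) * var0 st - s * cov01 st.
Proof.
  intros Hs Hsym HU st'.
  destruct (ol_gains s st Hs Hsym HU) as (HP & Hg1 & HGG).
  set (p := lmmse_along 1 s st) in *; unfold st'.
  change p with (lmmse_gains st (wt0 p) (wt1 p)).
  rewrite next_lmmse_gains by (rewrite HP; nra); cbn [var0 var1 cov01]; rewrite HP, Hg1.
  set (V := var0 st) in *; set (C := cov01 st) in *; set (U := V + s * C) in *.
  set (G := xcorr0 st (wt0 p) (wt1 p)) in *; set (K := t * sz + sz).
  assert (HK : 0 < K) by (unfold K; nra).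
  assert (Hv1 : var1 st - s * G * (s * G) / K = V - G * G / K).
  { rewrite <- Hsym; fold V.
    transitivity (V - (s * s) * (G * G) / K); [field; lra | rewrite Hs; lra]. }
  assert (HC : s * (C - 2 * G * (s * G) / K + G * (s * G) * (t * sz + rz * sz) / (K * K))
               = s * C - 2 * (G * G) / K + G * G * (t * sz + rz * sz) / (K * K)).
  { transitivity (s * C - (s * s) * (2 * (G * G) / K)
                   + (s * s) * (G * G * (t * sz + rz * sz) / (K * K)));
      [field; lra | rewrite Hs; ring]. }
  rewrite Hv1, HC; split; [reflexivity | split].
  - rewrite HGG; unfold ol_factor, K; replace (s * C) with (U - V) by (unfold U; ring).
    field; split; nra.
  - assert (0 <= G * G * (t * sz * (1 - rz)) / (K * K))
      by (apply div_nonneg; [apply Rmult_le_pos|]; nra).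
    enough (E : (2 - rz) * (V - G * G / K)
                - (s * C - 2 * (G * G) / K + G * G * (t * sz + rz * sz) / (K * K))
                = (2 - rz) * V - s * C - G * G * (t * sz * (1 - rz)) / (K * K)) by lra.
    unfold K; field; nra.
Qed.

Lemma sub_sq_div_le x g P : 0 <= P -> x - g * g / (P + sz) <= x.
Proof.
  intros HP; assert (0 <= g * g / (P + sz)) by (apply div_nonneg; nra); lra.
Qed.

Lemma focus0_step st : let st' := next_errcov sz rz st (lmmse_along 1 0 st) in
  var0 st' <= var0 st / (1 + t) /\ var1 st' <= var1 st.
Proof.
  assert (Hq : power st 1 0 = var0 st) by (unfold power; ring).
  unfold lmmse_along; rewrite Hq; set (a := amp sz t (var0 st)).
  assert (HP : power st (a * 1) (a * 0) = a * a * var0 st)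
    by (rewrite power_scale, Hq; reflexivity).
  assert (HP0 : 0 <= power st (a * 1) (a * 0)) by (rewrite HP; apply amp_power; assumption).
  rewrite next_lmmse_gains by exact HP0; cbn [var0 var1]; split.
  - replace (xcorr0 st (a * 1) (a * 0)) with (a * var0 st) by (unfold xcorr0; ring).
    rewrite HP; apply amp_contraction; assumption.
  - apply sub_sq_div_le; exact HP0.
Qed.

Lemma focus1_step st : let st' := next_errcov sz rz st (lmmse_along 0 1 st) in
  var1 st' <= var1 st / (1 + t) /\ var0 st' <= var0 st.
Proof.
  assert (Hq : power st 0 1 = var1 st) by (unfold power; ring).
  unfold lmmse_along; rewrite Hq; set (a := amp sz t (var1 st)).
  assert (HP : power st (a * 0) (a * 1) = a * a * var1 st)
    by (rewrite power_scale, Hq; reflexivity).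
  assert (HP0 : 0 <= power st (a * 0) (a * 1)) by (rewrite HP; apply amp_power; assumption).
  rewrite next_lmmse_gains by exact HP0; cbn [var0 var1]; split.
  - replace (xcorr1 st (a * 0) (a * 1)) with (a * var1 st) by (unfold xcorr1; ring).
    rewrite HP; apply amp_contraction; assumption.
  - apply sub_sq_div_le; exact HP0.
Qed.

End LmmseSteps.

Lemma decay_run (x y : nat -> R) r a J : 0 <= r ->
  (forall k, (a <= k < a + J)%nat -> x (S k) <= r * x k /\ y (S k) <= y k) ->
  x (a + J)%nat <= r ^ J * x a /\ y (a + J)%nat <= y a.
Proof.
  intros Hr Hstep; induction J as [|J IH].
  - rewrite Nat.add_0_r; cbn; lra.
  - destruct IH as [IHx IHy]; [intros k Hk; apply Hstep; lia|].
    rewrite Nat.add_succ_r; destruct (Hstep (a + J)%nat) as [Hx Hy]; [lia|].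
    cbn [pow]; split; [|lra].
    apply (Rmult_le_compat_l r) in IHx; [lra | exact Hr].
Qed.

Definition ol_policy (sz t s : R) (N1 N2 k : nat) : ErrCov -> Coef :=
  if Nat.ltb k N1 then lmmse_along sz t 1 s
  else if Nat.ltb k (N1 + N2) then lmmse_along sz t 1 0
  else lmmse_along sz t 0 1.

Lemma ol_policy_phase1 sz t s N1 N2 k : (k < N1)%nat ->
  ol_policy sz t s N1 N2 k = lmmse_along sz t 1 s.
Proof. intros Hk; unfold ol_policy; destruct (Nat.ltb_spec k N1); [reflexivity | lia]. Qed.

Lemma ol_policy_phase2 sz t s N1 N2 k : (N1 <= k < N1 + N2)%nat ->
  ol_policy sz t s N1 N2 k = lmmse_along sz t 1 0.
Proof.
  intros Hk; unfold ol_policy.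
  destruct (Nat.ltb_spec k N1), (Nat.ltb_spec k (N1 + N2)); [lia | lia | reflexivity | lia].
Qed.

Lemma ol_policy_phase3 sz t s N1 N2 k : (N1 + N2 <= k)%nat ->
  ol_policy sz t s N1 N2 k = lmmse_along sz t 0 1.
Proof.
  intros Hk; unfold ol_policy.
  destruct (Nat.ltb_spec k N1), (Nat.ltb_spec k (N1 + N2)); [lia | lia | lia | reflexivity].
Qed.

Section ThreePhases.
Variables (ss rs sz rz t s : R) (N1 N2 : nat).
Hypotheses (Ht : 0 < t) (Hsz : 0 < sz) (Hrz : -1 < rz < 1) (Hs : s * s = 1).

Local Notation st := (errcov ss rs sz rz (ol_policy sz t s N1 N2)).
Local Notation U0 := (ss + s * (ss * rs)).
Local Notation W0 := ((2 - rz) * ss - s * (ss * rs)).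

Lemma ol_factor_pos : 0 < ol_factor rz t.
Proof. unfold ol_factor; apply Rdiv_lt_0_compat; nra. Qed.

Lemma ol_phase k : (k <= N1)%nat -> 0 < U0 ->
  var0 (st k) = var1 (st k)
  /\ var0 (st k) + s * cov01 (st k) = U0 * ol_factor rz t ^ k
  /\ (2 - rz) * var0 (st k) - s * cov01 (st k) <= W0.
Proof.
  intros Hk HU0; induction k as [|k IH]; [cbn; lra|].
  destruct IH as (Hsym & HU & HW); [lia|].
  assert (HUk : 0 < var0 (st k) + s * cov01 (st k)).
  { rewrite HU; apply Rmult_lt_0_compat; [lra | apply pow_lt, ol_factor_pos]. }
  cbn [errcov]; rewrite ol_policy_phase1 by lia.
  destruct (ol_step sz rz t Ht Hsz Hrz s (st k) Hs Hsym HUk) as (Hsym' & HU' & HW').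
  split; [exact Hsym' | split; [rewrite HU', HU; cbn [pow]; ring | lra]].
Qed.

Lemma three_phase_distortion Dm D : 0 < U0 ->
  U0 * ol_factor rz t ^ N1 <= (3 - rz) * Dm - W0 -> Dm * (/ (1 + t)) ^ N2 <= D ->
  var0 (st (N1 + N2 + N2)) <= D /\ var1 (st (N1 + N2 + N2)) <= D.
Proof.
  intros HU0 Hphase1 Hfocus.
  destruct (ol_phase N1 (le_n _) HU0) as (Hsym & HU & HW).
  assert (HV : var0 (st N1) <= Dm) by (apply (Rmult_le_reg_l (3 - rz)); lra).
  assert (Hr : 0 <= / (1 + t)) by (apply Rlt_le, Rinv_0_lt_compat; lra).
  assert (Hrn : 0 <= (/ (1 + t)) ^ N2) by (apply pow_le; exact Hr).
  destruct (decay_run (fun k => var0 (st k)) (fun k => var1 (st k)) (/ (1 + t)) N1 N2 Hr)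
    as [H2x H2y].
  { intros k Hk; cbn [errcov]; rewrite ol_policy_phase2 by lia.
    rewrite Rmult_comm; apply focus0_step; assumption. }
  destruct (decay_run (fun k => var1 (st k)) (fun k => var0 (st k)) (/ (1 + t)) (N1 + N2) N2 Hr)
    as [H3x H3y].
  { intros k Hk; cbn [errcov]; rewrite ol_policy_phase3 by lia.
    rewrite Rmult_comm; apply focus1_step; assumption. }
  cbv beta in *.
  apply (Rmult_le_compat_l ((/ (1 + t)) ^ N2)) in HV; [|exact Hrn].
  split; nra.
Qed.

Lemma ol_power k :
  power (st k) (wt0 (coef ss rs sz rz (ol_policy sz t s N1 N2) k))
               (wt1 (coef ss rs sz rz (ol_policy sz t s N1 N2) k)) <= t * sz.
Proof.
  unfold coef, ol_policy; destruct (Nat.ltb k N1), (Nat.ltb k (N1 + N2));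
    apply lmmse_along_power; assumption.
Qed.

End ThreePhases.

Lemma exp_le x y : x <= y -> exp x <= exp y.
Proof. intros [H | ->]; [left; apply exp_increasing; exact H | right; reflexivity]. Qed.

Lemma exp_pow x N : exp x ^ N = exp (INR N * x).
Proof.
  induction N as [|N IH]; [cbn; rewrite Rmult_0_l, exp_0; reflexivity|].
  rewrite S_INR; cbn [pow]; rewrite IH, <- exp_plus; f_equal; ring.
Qed.

Lemma ln_nonneg x : 1 <= x -> 0 <= ln x.
Proof. intros [H | <-]; [rewrite <- ln_1; left; apply ln_increasing; lra | rewrite ln_1; lra]. Qed.

Lemma nat_ceil x : 0 <= x -> exists N : nat, x <= INR N <= x + 1.
Proof.
  intros Hx; destruct (archimed x) as [Hup Hup1].
  assert (Hz : (0 <= up x)%Z) by (apply le_IZR; lra).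
  exists (Z.to_nat (up x)); rewrite INR_IZR_INZ, Z2Nat.id by exact Hz; lra.
Qed.

Lemma enough_steps f mu L : 0 < f -> f <= exp (- mu) -> 0 < mu -> 0 <= L ->
  exists N : nat, f ^ N <= exp (- L) /\ INR N <= L / mu + 1.
Proof.
  intros Hf Hfmu Hmu HL.
  destruct (nat_ceil (L / mu)) as [N [HN1 HN2]]; [apply div_nonneg; assumption|].
  exists N; split; [|exact HN2].
  apply Rle_trans with (exp (- mu) ^ N); [apply pow_incr; lra|].
  rewrite exp_pow; apply exp_le.
  apply (Rmult_le_compat_r mu) in HN1; [|lra].
  replace (L / mu * mu) with L in HN1 by (field; lra); lra.
Qed.

Lemma inv_succ_le_exp t : 0 < t -> / (1 + t) <= exp (- (t / (1 + t))).
Proof. intros Ht; eapply Rle_trans; [|apply exp_ineq1_le]; right; field; lra. Qed.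

Definition ol_exponent (rz t : R) : R := 2 * t / (1 + t) - t * (1 + rz) / 2.

Lemma ol_factor_le_exp rz t : 0 < t -> -1 < rz -> ol_factor rz t <= exp (- ol_exponent rz t).
Proof.
  intros Ht Hrz; unfold ol_factor, ol_exponent.
  replace (- (2 * t / (1 + t) - t * (1 + rz) / 2))
    with (t * (1 + rz) / 2 + (- (t / (1 + t)) + - (t / (1 + t)))) by (field; lra).
  rewrite !exp_plus.
  replace ((1 + t * (1 + rz) / 2) / ((1 + t) * (1 + t)))
    with ((1 + t * (1 + rz) / 2) * (/ (1 + t) * / (1 + t))) by (field; lra).
  assert (H1 := exp_ineq1_le (t * (1 + rz) / 2)).
  assert (H2 := inv_succ_le_exp t Ht).
  assert (0 < / (1 + t)) by (apply Rinv_0_lt_compat; lra).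
  apply Rmult_le_compat; nra.
Qed.

Lemma ol_exponent_pos rz t : 0 < t <= 1 -> -1 < rz < 1 -> 0 < ol_exponent rz t.
Proof.
  intros Ht Hrz; unfold ol_exponent.
  replace (2 * t / (1 + t) - t * (1 + rz) / 2)
    with (t * (4 - (1 + rz) * (1 + t)) / (2 * (1 + t))) by (field; lra).
  apply Rdiv_lt_0_compat; [apply Rmult_lt_0_compat|]; nra.
Qed.

(* [t / ol_exponent] is the energy, in units of [sz], spent per nat of decrease of
   [var0 + s cov01]; it tends to [2 / (3 - rz)], the constant in [E_OL], as [t -> 0]. *)
Lemma ol_slope rz t : 0 < t <= 1 -> -1 < rz < 1 ->
  t / ol_exponent rz t <= 2 / (3 - rz) + 4 * t / (1 - rz).
Proof.
  intros Ht Hrz; unfold ol_exponent.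
  set (D1 := 3 - rz - t * (1 + rz)).
  assert (HD1 : 2 * (1 - rz) <= D1) by (unfold D1; nra).
  replace (t / (2 * t / (1 + t) - t * (1 + rz) / 2)) with (2 / (3 - rz) + 8 * t / (D1 * (3 - rz)))
    by (unfold D1; field; repeat split; try lra; nra).
  apply Rplus_le_compat_l.
  apply (Rmult_le_reg_r (D1 * (3 - rz) * (1 - rz))); [apply Rmult_lt_0_compat; nra|].
  replace (8 * t / (D1 * (3 - rz)) * (D1 * (3 - rz) * (1 - rz)))
    with (8 * t * (1 - rz)) by (field; lra).
  replace (4 * t / (1 - rz) * (D1 * (3 - rz) * (1 - rz)))
    with (4 * t * (D1 * (3 - rz))) by (field; lra).
  assert (D1 * (3 - rz) >= 4 * (1 - rz)) by nra; nra.
Qed.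

Lemma ol_energy_budget sz rz t L1 L2 N1 N2 : 0 < sz -> -1 < rz < 1 -> 0 < t <= 1 ->
  0 <= L1 -> 0 <= L2 ->
  INR N1 <= L1 / ol_exponent rz t + 1 -> INR N2 <= L2 / (t / (1 + t)) + 1 ->
  INR (N1 + N2 + N2) * (t * sz)
  <= 2 * sz / (3 - rz) * L1 + 2 * sz * L2 + t * sz * (4 * L1 / (1 - rz) + 2 * L2 + 3).
Proof.
  intros Hsz Hrz Ht HL1 HL2 HN1 HN2.
  assert (Hmu := ol_exponent_pos rz t Ht Hrz).
  assert (A1 : t * INR N1 <= L1 * (2 / (3 - rz) + 4 * t / (1 - rz)) + t).
  { apply (Rmult_le_compat_l t) in HN1; [|lra].
    assert (Hsl := ol_slope rz t Ht Hrz).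
    apply (Rmult_le_compat_l L1) in Hsl; [|lra].
    replace (t * (L1 / ol_exponent rz t + 1)) with (L1 * (t / ol_exponent rz t) + t) in HN1
      by (field; lra).
    lra. }
  assert (A2 : t * INR N2 <= L2 * (1 + t) + t).
  { apply (Rmult_le_compat_l t) in HN2; [|lra].
    replace (t * (L2 / (t / (1 + t)) + 1)) with (L2 * (1 + t) + t) in HN2 by (field; lra).
    exact HN2. }
  rewrite !plus_INR.
  apply (Rmult_le_compat_l sz) in A1, A2; lra.
Qed.

Lemma linear_code_mono ss rs sz rz D D' E E' m n a b c :
  D <= D' -> E <= E' -> linear_code ss rs sz rz D E m n a b c ->
  linear_code ss rs sz rz D' E' m n a b c.
Proof.
  intros HD HE [Hdist Hen]; assert (Hm := pos_INR m); split.
  - intros i Hi; specialize (Hdist i Hi); nra.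
  - nra.
Qed.

Lemma sign_of rs : exists s, s * s = 1 /\ s * rs = Rabs rs.
Proof.
  destruct (Rle_lt_dec 0 rs).
  - exists 1; rewrite Rabs_right by lra; split; ring.
  - exists (-1); rewrite Rabs_left by lra; split; ring.
Qed.

Lemma small_param c eps : 0 < c -> 0 < eps -> exists t, 0 < t <= 1 /\ t * c <= eps.
Proof.
  intros Hc Heps; exists (Rmin 1 (eps / c)); split; [split|].
  - apply Rmin_glb_lt; [lra | apply Rdiv_lt_0_compat; assumption].
  - apply Rmin_l.
  - apply Rle_trans with (eps / c * c); [apply Rmult_le_compat_r; [lra | apply Rmin_r]|].
    right; field; lra.
Qed.

Lemma le_mul_of_le_exp_neg_ln a b y : 0 < a -> 0 < b ->
  y <= exp (- ln (a / b)) -> a * y <= b.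
Proof.
  intros Ha Hb Hy; rewrite exp_Ropp, exp_ln in Hy by (apply Rdiv_lt_0_compat; assumption).
  apply (Rmult_le_compat_l a) in Hy; [|lra].
  replace (a * / (a / b)) with b in Hy by (field; lra); exact Hy.
Qed.

Lemma ln_div_nonneg a b : 0 < b -> b <= a -> 0 <= ln (a / b).
Proof.
  intros Hb Hba; apply ln_nonneg.
  apply (Rmult_le_reg_r b); [exact Hb|]; unfold Rdiv; rewrite Rmult_assoc, Rinv_l; lra.
Qed.

Lemma ol_schedule sz rz L1 L2 eps : 0 < sz -> -1 < rz < 1 -> 0 <= L1 -> 0 <= L2 -> 0 < eps ->
  exists t N1 N2, 0 < t <= 1
    /\ ol_factor rz t ^ N1 <= exp (- L1) /\ (/ (1 + t)) ^ N2 <= exp (- L2)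
    /\ INR (N1 + N2 + N2) * (t * sz) <= 2 * sz / (3 - rz) * L1 + 2 * sz * L2 + eps.
Proof.
  intros Hsz Hrz HL1 HL2 Heps.
  set (K := 4 * L1 / (1 - rz) + 2 * L2 + 3).
  assert (HK : 0 < K).
  { assert (0 <= 4 * L1 / (1 - rz)) by (apply div_nonneg; lra); unfold K; lra. }
  destruct (small_param (sz * K) eps) as (t & Ht & HtK); [nra | exact Heps|].
  destruct (enough_steps (ol_factor rz t) (ol_exponent rz t) L1) as (N1 & HN1 & HN1');
    [apply ol_factor_pos | apply ol_factor_le_exp | apply ol_exponent_pos | exact HL1 |]; try lra.
  destruct (enough_steps (/ (1 + t)) (t / (1 + t)) L2) as (N2 & HN2 & HN2');
    [apply Rinv_0_lt_compat | apply inv_succ_le_exp | apply Rdiv_lt_0_compat | exact HL2 |]; try lra.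
  exists t, N1, N2; repeat split; try assumption; try lra.
  eapply Rle_trans; [apply (ol_energy_budget sz rz t L1 L2 N1 N2); auto; lra|].
  fold K; nra.
Qed.

(* Energy of running the Ozarow-Leung phase until both distortions reach [Dm], and then
   refining each user alone from [Dm] down to [D]. *)
Definition ol_energy (ss rs sz rz D Dm : R) : R :=
  2 * sz / (3 - rz) * ln (ss * (1 + Rabs rs) / ((3 - rz) * Dm - ss * (2 - rz - Rabs rs)))
  + 2 * sz * ln (Dm / D).

Lemma ol_achievable ss rs sz rz D Dm :
  0 < ss -> 0 < sz -> Rabs rs < 1 -> Rabs rz < 1 -> 0 < D ->
  D <= Dm -> ss * (2 - rz - Rabs rs) <= (2 - rz) * Dm -> Dm <= ss ->
  lin_achievable ss rs sz rz D (ol_energy ss rs sz rz D Dm).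
Proof.
  intros Hss Hsz Hrs Hrz HD HDm HDth HDss eps Heps.
  destruct (Rabs_def2 _ _ Hrs) as [Hrs1 Hrs2]; destruct (Rabs_def2 _ _ Hrz) as [Hrz1 Hrz2].
  assert (Har := Rabs_pos rs).
  destruct (sign_of rs) as (s & Hs & Hsr).
  set (U0 := ss * (1 + Rabs rs)) in *; set (W0 := ss * (2 - rz - Rabs rs)) in *.
  set (Ut := (3 - rz) * Dm - W0).
  assert (HU0 : 0 < U0) by (unfold U0; nra).
  assert (HUt : 0 < Ut) by (unfold Ut; lra).
  assert (HL1 : 0 <= ln (U0 / Ut)) by (apply ln_div_nonneg; unfold Ut, U0, W0 in *; nra).
  assert (HL2 : 0 <= ln (Dm / D)) by (apply ln_div_nonneg; lra).
  destruct (ol_schedule sz rz (ln (U0 / Ut)) (ln (Dm / D)) eps)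
    as (t & N1 & N2 & Ht & HN1 & HN2 & HE); try assumption; [lra|].
  set (policy := ol_policy sz t s N1 N2).
  exists 1%nat, (N1 + N2 + N2)%nat, (enc_src ss rs sz rz policy), (enc_fb ss rs sz rz policy),
    (dec ss rs sz rz policy); split; [lia|].
  apply linear_code_mono with (D := D) (E := INR (N1 + N2 + N2) * (t * sz)); [lra | exact HE |].
  assert (EU : ss + s * (ss * rs) = U0) by (unfold U0; rewrite <- Hsr; ring).
  assert (EW : (2 - rz) * ss - s * (ss * rs) = W0) by (unfold W0; rewrite <- Hsr; ring).
  destruct (three_phase_distortion ss rs sz rz t s N1 N2 ltac:(lra) Hsz ltac:(lra) Hs Dm D)
    as [Hd0 Hd1]; rewrite ?EU, ?EW; try assumption.
  - apply le_mul_of_le_exp_neg_ln; assumption.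
  - apply le_mul_of_le_exp_neg_ln; lra.
  - apply scheme_linear_code; [exact Hd0 | exact Hd1 | intros; apply ol_power; lra].
Qed.

Lemma E_OL_ol_energy ss rs sz rz D : 0 < ss -> Rabs rs < 1 -> Rabs rz < 1 -> 0 < D ->
  E_OL ss rs sz rz D = ol_energy ss rs sz rz D (Rmax D (D_th ss rs rz)).
Proof.
  intros Hss Hrs Hrz HD.
  destruct (Rabs_def2 _ _ Hrs) as [Hrs1 Hrs2]; destruct (Rabs_def2 _ _ Hrz) as [Hrz1 Hrz2].
  assert (Har := Rabs_pos rs).
  unfold E_OL, ol_energy; destruct (Rle_dec (D_th ss rs rz) D) as [Hth|Hth].
  - rewrite Rmax_left by exact Hth.
    replace (D / D) with 1 by (field; lra); rewrite ln_1.
    replace ((3 - rz) * D - ss * (2 - rz - Rabs rs))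
      with (D + (2 - rz) * (D - ss) + ss * Rabs rs) by ring; ring.
  - rewrite Rmax_right by lra; unfold D_th.
    replace (ss * (1 + Rabs rs)
             / ((3 - rz) * (ss * (2 - rz - Rabs rs) / (2 - rz)) - ss * (2 - rz - Rabs rs)))
      with ((2 - rz) * (1 + Rabs rs) / (2 - rz - Rabs rs)) by (field; split; nra).
    replace (ss * (2 - rz - Rabs rs) / (2 - rz) / D) with ((2 - rz - Rabs rs) * ss / ((2 - rz) * D))
      by (field; lra).
    field; lra.
Qed.

Theorem theorem4 (ss rs sz rz D : R)
  (Hss : 0 < ss) (Hsz : 0 < sz) (Hrs : Rabs rs < 1) (Hrz : Rabs rz < 1)
  (HD0 : 0 < D) (HD1 : D <= ss) :
  lin_achievable ss rs sz rz D (E_OL ss rs sz rz D).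
Proof.
  destruct (Rabs_def2 _ _ Hrs) as [Hrs1 Hrs2]; destruct (Rabs_def2 _ _ Hrz) as [Hrz1 Hrz2].
  assert (Har := Rabs_pos rs).
  assert (Hth : (2 - rz) * D_th ss rs rz = ss * (2 - rz - Rabs rs)) by (unfold D_th; field; lra).
  rewrite E_OL_ol_energy by assumption.
  apply ol_achievable; try assumption.
  - apply Rmax_l.
  - apply Rle_trans with ((2 - rz) * D_th ss rs rz); [lra|].
    apply Rmult_le_compat_l; [lra | apply Rmax_r].
  - apply Rmax_lub; [exact HD1|].
    apply (Rmult_le_reg_l (2 - rz)); [lra|]; rewrite Hth; nra.
Qed.
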